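(* Let $M,K\ge 1$, let ${\bf U}^c\in\mathbb{C}^{M\times M}$ be unitary, and for $k=1,\dots,K$ let $\boldsymbol{\Lambda}_k\in\mathbb{R}^{M\times M}$ be diagonal with strictly positive diagonal entries. Set $\boldsymbol{\Sigma}_k={\bf U}^c\boldsymbol{\Lambda}_k({\bf U}^c)^{\sf H}$. Consider the problem $$\min_{{\bf U}}\; f({\bf U})=\sum_{m=1}^M\sum_{k=1}^K\log\big({\bf u}_m^{\sf H}\boldsymbol{\Sigma}_k{\bf u}_m\big)\quad\text{subject to}\quad {\bf u}_m^{\sf H}{\bf u}_n=\delta_{m,n}\ \ (m,n\in[M]),$$ where ${\bf u}_1,\dots,{\bf u}_M$ are the columns of ${\bf U}$. Then ${\bf U}^c$ is a global minimizer of this problem, i.e. $f({\bf U}^c)\le f({\bf U})$ for every unitary ${\bf U}\in\mathbb{C}^{M\times M}$.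
   Context: $[M]=\{1,\dots,M\}$, $\delta_{m,n}$ is the Kronecker delta, and ${}^{\sf H}$ denotes conjugate transpose. A matrix ${\bf U}$ is unitary if ${\bf U}^{\sf H}{\bf U}={\bf I}_M$. *)

From HB Require Import structures.
From mathcomp Require Import all_boot all_order all_algebra.
From mathcomp Require Import complex.
From mathcomp Require Import reals exp.
Set Implicit Arguments. Unset Strict Implicit. Unset Printing Implicit Defensive.
Import Order.TTheory GRing.Theory Num.Theory.
Local Open Scope ring_scope.
Local Open Scope complex_scope.

Definition mxH (R : rcfType) (m n : nat) (A : 'M[R[i]]_(m, n)) : 'M[R[i]]_(n, m) :=
  (map_mx (fun z => z^*) A)^T.

Definition unitary_mx (R : rcfType) (M : nat) (U : 'M[R[i]]_M) : Prop :=
  mxH U *m U = 1%:M.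

Definition Sigma (R : rcfType) (M : nat) (Uc : 'M[R[i]]_M) (Lam : 'M[R]_M)
  : 'M[R[i]]_M := Uc *m map_mx (fun x => x%:C) Lam *m mxH Uc.

Definition qform (R : rcfType) (M : nat) (S : 'M[R[i]]_M) (u : 'cV[R[i]]_M) : R[i] :=
  (mxH u *m S *m u) 0 0.

(* f(U) = sum_m sum_k log(u_m^H Sigma_k u_m); the quadratic form is real
   (Sigma_k Hermitian), we take its real part before applying ln. *)
Definition objf (R : realType) (M K : nat) (Uc : 'M[R[i]]_M)
  (Lam : 'I_K -> 'M[R]_M) (U : 'M[R[i]]_M) : R :=
  \sum_(m < M) \sum_(k < K) ln (complex.Re (qform (Sigma Uc (Lam k)) (col m U))).

From HB Require Import structures.
From mathcomp Require Import all_boot all_order all_algebra.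
From mathcomp Require Import complex.
From mathcomp Require Import reals exp.
From mathcomp Require Import ring.
Import Order.TTheory GRing.Theory Num.Theory.
Local Open Scope ring_scope.
Local Open Scope complex_scope.

(* Put V := Uc^H U, which is unitary.  For a diagonal Lambda,
   u_m^H Sigma u_m = sum_j |V_jm|^2 lambda_j, where u_m is the m-th column
   of U; at U = Uc (V = I) this is just lambda_m.  Since V is unitary, the
   matrix P_jm := |V_jm|^2 is doubly stochastic.  Concavity of ln (Jensen's
   inequality for the weights P_.m) then gives
     sum_m ln (sum_j P_jm lambda_j) >= sum_m sum_j P_jm ln lambda_j
                                    = sum_j ln lambda_j,
   the last step using that the rows of P also sum to 1.  Summing over k
   yields f(Uc) <= f(U). *)

Section LnConcavity.
Set Implicit Arguments. Unset Strict Implicit.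
Variable R : realType.

Lemma ln_le_subr1 (y : R) : 0 < y -> ln y <= y - 1.
Proof.
move=> y_gt0; have := expR_ge1Dx (ln y); rewrite lnK ?posrE //.
by rewrite lerBrDl addrC.
Qed.

Lemma convex_comb_gt0 n (p l : 'I_n -> R) :
  (forall j, 0 <= p j) -> \sum_j p j = 1 -> (forall j, 0 < l j) ->
  0 < \sum_j p j * l j.
Proof.
move=> p_ge0 p_sum1 l_gt0.
have pl_ge0 j : 0 <= p j * l j by rewrite mulr_ge0 // ltW.
rewrite lt_def sumr_ge0 ?andbT //; apply/negP => /eqP/psumr_eq0P pl0.
have p0 j : p j = 0.
  have /eqP := pl0 (fun i _ => pl_ge0 i) j isT.
  by rewrite mulf_eq0 (gt_eqF (l_gt0 j)) orbF => /eqP.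
by move: p_sum1; rewrite big1 // => /eqP; rewrite eq_sym oner_eq0.
Qed.

Lemma jensen_ln n (p l : 'I_n -> R) :
  (forall j, 0 <= p j) -> \sum_j p j = 1 -> (forall j, 0 < l j) ->
  \sum_j p j * ln (l j) <= ln (\sum_j p j * l j).
Proof.
move=> p_ge0 p_sum1 l_gt0; have := convex_comb_gt0 p_ge0 p_sum1 l_gt0.
set S := \sum_j p j * l j => S_gt0; rewrite -subr_le0.
have -> : \sum_j p j * ln (l j) - ln S = \sum_j p j * ln (l j / S).
  rewrite -[ln S]mul1r -p_sum1 mulr_suml -sumrB; apply: eq_bigr => j _.
  by rewrite ln_div ?posrE // mulrBr.
apply: (le_trans (y := \sum_j p j * (l j / S - 1))).
  by apply: ler_sum => j _; rewrite ler_wpM2l // ln_le_subr1 // divr_gt0.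
rewrite (eq_bigr (fun j => p j * l j / S - p j)); last first.
  by move=> j _; rewrite mulrBr mulr1 mulrA.
by rewrite sumrB -mulr_suml p_sum1 divff ?gt_eqF // subrr.
Qed.

Lemma sum_ln_le_doubly_stochastic n (P : 'I_n -> 'I_n -> R) (l : 'I_n -> R) :
  (forall j m, 0 <= P j m) ->
  (forall m, \sum_j P j m = 1) -> (forall j, \sum_m P j m = 1) ->
  (forall j, 0 < l j) ->
  \sum_m ln (l m) <= \sum_m ln (\sum_j P j m * l j).
Proof.
move=> P_ge0 col_sum1 row_sum1 l_gt0.
have -> : \sum_m ln (l m) = \sum_m \sum_j P j m * ln (l j).
  rewrite exchange_big /=; apply: eq_bigr => j _.
  by rewrite -mulr_suml row_sum1 mul1r.
by apply: ler_sum => m _; apply: jensen_ln.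
Qed.

End LnConcavity.

Section UnitaryMatrices.
Set Implicit Arguments. Unset Strict Implicit.
Variable R : rcfType.

Lemma mxH_mul m n p (A : 'M[R[i]]_(m, n)) (B : 'M[R[i]]_(n, p)) :
  mxH (A *m B) = mxH B *m mxH A.
Proof. by rewrite /mxH map_mxM trmx_mul. Qed.

Lemma mxHK m n (A : 'M[R[i]]_(m, n)) : mxH (mxH A) = A.
Proof. by apply/matrixP => i j; rewrite !mxE conjcK. Qed.

(* A square matrix with a left inverse U^H also has U^H as right inverse. *)
Lemma unitary_mxH M (U : 'M[R[i]]_M) : unitary_mx U -> unitary_mx (mxH U).
Proof. by rewrite /unitary_mx mxHK => /mulmx1C. Qed.

Lemma unitary_mxH_mul M (U V : 'M[R[i]]_M) :
  unitary_mx U -> unitary_mx V -> unitary_mx (mxH U *m V).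
Proof.
move=> /unitary_mxH; rewrite /unitary_mx mxHK => UUH VHV.
by rewrite mxH_mul mxHK mulmxA -(mulmxA (mxH V)) UUH mulmx1.
Qed.

Definition sqmod (z : R[i]) : R := complex.Re (z^* * z).

Lemma sqmod_ge0 (z : R[i]) : 0 <= sqmod z.
Proof.
by case: z => a b; rewrite /sqmod /= mulNr opprK -!expr2 addr_ge0 ?sqr_ge0.
Qed.

Lemma sqmod_conj (z : R[i]) : sqmod z^* = sqmod z.
Proof. by case: z => a b; rewrite /sqmod /=; ring. Qed.

Lemma Re_sum n (F : 'I_n -> R[i]) :
  complex.Re (\sum_j F j) = \sum_j complex.Re (F j).
Proof. exact: (raddf_sum (@complex.Re R : Rcomplex R -> R)). Qed.

Lemma unitary_col_sqmod M (V : 'M[R[i]]_M) (m : 'I_M) :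
  unitary_mx V -> \sum_j sqmod (V j m) = 1.
Proof.
move=> /(congr1 (fun A : 'M[R[i]]_M => complex.Re (A m m))).
by rewrite /= !mxE eqxx /= Re_sum => <-; apply: eq_bigr => j _; rewrite !mxE.
Qed.

Lemma unitary_row_sqmod M (V : 'M[R[i]]_M) (j : 'I_M) :
  unitary_mx V -> \sum_m sqmod (V j m) = 1.
Proof.
move=> /unitary_mxH /(unitary_col_sqmod j) <-.
by apply: eq_bigr => m _; rewrite !mxE sqmod_conj.
Qed.

Lemma Re_qform_Sigma M (Uc : 'M[R[i]]_M) (L : 'M[R]_M) (u : 'cV[R[i]]_M) :
  is_diag_mx L ->
  complex.Re (qform (Sigma Uc L) u) = \sum_j sqmod ((mxH Uc *m u) j 0) * L j j.
Proof.
move=> L_diag; rewrite /qform /Sigma !mulmxA -[mxH u *m Uc]mxHK mxH_mul mxHK.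
rewrite -mulmxA; set w := mxH Uc *m u; clearbody w.
rewrite mxE Re_sum; apply: eq_bigr => j _.
rewrite mxE (bigD1 j) //= big1 ?addr0; last first.
  by move=> l l_neq_j; rewrite !mxE (is_diag_mxP L_diag l j l_neq_j) ?mulr0 ?mul0r.
rewrite !mxE mulrC /sqmod; case: (w j 0) => a b /=; ring.
Qed.

End UnitaryMatrices.

Section ObjectiveDiagonalForm.
Variables (R : realType) (M K : nat) (Uc : 'M[R[i]]_M) (Lam : 'I_K -> 'M[R]_M).
Hypothesis Lam_diag : forall k, is_diag_mx (Lam k).

Lemma objf_diag (U : 'M[R[i]]_M) :
  objf Uc Lam U =
  \sum_(m < M) \sum_(k < K) ln (\sum_j sqmod ((mxH Uc *m U) j m) * Lam k j j).
Proof.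
apply: eq_bigr => m _; apply: eq_bigr => k _.
rewrite Re_qform_Sigma //; congr ln; apply: eq_bigr => j _.
by rewrite colE mulmxA -colE mxE.
Qed.

(* At U = Uc the weights are those of the identity matrix, so each
   quadratic form is an eigenvalue of Sigma_k. *)
Lemma objf_at_eigenbasis :
  unitary_mx Uc -> objf Uc Lam Uc = \sum_(m < M) \sum_(k < K) ln (Lam k m m).
Proof.
move=> Uc_unitary; rewrite objf_diag Uc_unitary.
apply: eq_bigr => m _; apply: eq_bigr => k _; congr ln.
rewrite (bigD1 m) //= big1 ?addr0 => [|j j_neq_m].
  by rewrite mxE eqxx /sqmod /= mulr1 mulr0 subr0 mul1r.
by rewrite mxE (negbTE j_neq_m) /sqmod /= !mulr0 subrr mul0r.
Qed.

End ObjectiveDiagonalForm.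

Theorem theorem1 (R : realType) (M K : nat) (hM : (1 <= M)%N) (hK : (1 <= K)%N)
  (Uc : 'M[R[i]]_M) (hUc : unitary_mx Uc)
  (Lam : 'I_K -> 'M[R]_M)
  (hdiag : forall k, is_diag_mx (Lam k))
  (hpos : forall k (j : 'I_M), 0 < Lam k j j)
  (U : 'M[R[i]]_M) (hU : unitary_mx U) :
  objf Uc Lam Uc <= objf Uc Lam U.
Proof.
rewrite objf_at_eigenbasis // objf_diag //.
have V_unitary := unitary_mxH_mul hUc hU.
rewrite exchange_big [X in _ <= X]exchange_big /=; apply: ler_sum => k _.
apply: (sum_ln_le_doubly_stochastic (P := fun j m => sqmod ((mxH Uc *m U) j m)))
  => [j m|m|j|j].
- exact: sqmod_ge0.
- exact: unitary_col_sqmod.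
- exact: unitary_row_sqmod.
- exact: hpos.
Qed.
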